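(* There is no universal first-order sentence $\varphi$ in the language of residuation algebras (and indeed none in the language of residuated lattices) such that for every residuation algebra $\mathbb{A}$ (resp. residuated lattice), $\mathbb{A}\models\varphi$ if and only if the dual structure $\mathbb{A}^\delta_+$ is functional. In particular, the complex algebra $(\mathcal{P}(\mathbb{Z}_3),\cap,\cup,\cdot,\backslash,/,\{0\})$ of the group $\mathbb{Z}_3$ has a functional (indeed total) dual structure, while its subalgebra with universe $\{\emptyset,\{0\},\{1,2\},\mathbb{Z}_3\}$ does not.
   Context: A residuation algebra is a structure $(A,\backslash,/)$ where $A$ is a bounded distributive lattice and $\backslash,/$ are binary operations on $A$ such that $\backslash$ preserves finite (including empty) meets in its second coordinate, $/$ preserves finite (including empty) meets in its first coordinate, and for all $a,b,c\in A$: $b\leq a\backslash c$ iff $a\leq c/b$; its language consists of the bounded lattice operations together with $\backslash$ and $/$. The canonical extension $A^\delta$ of $A$ is the dense and compact completion of $A$ (for finite $A$, $A^\delta=A$). The $\pi$-extensions $\backslash^\pi,/^\pi$ of $\backslash,/$ are defined by: for $k$ a meet of elements of $A$ and $o$ a join of elements of $A$, $k\backslash^\pi o=\bigvee\{a\backslash b\mid a,b\in A, k\leq a, b\leq o\}$, extended to arbitrary $u,v$ by $u\backslash^\pi v=\bigwedge\{k\backslash^\pi o\mid k\leq u, v\leq o\}$, and symmetrically for $/$. The product $\cdot$ on $A^\delta$ is the operation with $v\leq u\backslash^\pi w$ iff $u\cdot v\leq w$ iff $u\leq w/^\pi v$. $J^\infty(A^\delta)$ is the set of completely join-irreducible elements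 of $A^\delta$. $\mathbb{A}^\delta_+$ is functional if $y\cdot z\in J^\infty(A^\delta)\cup\{\bot\}$ for all $y,z\in J^\infty(A^\delta)$, and total if $y\cdot z\in J^\infty(A^\delta)$ for all such $y,z$. In the complex algebra of $\mathbb{Z}_3$: $X\cdot Y=\{x+y\mid x\in X,y\in Y\}$, $X\backslash Y=\{c\mid X\cdot\{c\}\subseteq Y\}$, $X/Y=\{c\mid\{c\}\cdot Y\subseteq X\}$. *)

From mathcomp Require Import all_boot all_order all_algebra.
Set Implicit Arguments. Unset Strict Implicit. Unset Printing Implicit Defensive.

Record ra_sig := RaSig {
  ra_car :> Type;
  ra_meet : ra_car -> ra_car -> ra_car;
  ra_join : ra_car -> ra_car -> ra_car;
  ra_bot : ra_car;
  ra_top : ra_car;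
  ra_ldiv : ra_car -> ra_car -> ra_car;
  ra_rdiv : ra_car -> ra_car -> ra_car
}.

Record rl_sig := RlSig {
  rl_ra :> ra_sig;
  rl_mul : rl_ra -> rl_ra -> rl_ra;
  rl_unit : rl_ra
}.

Section RaLaws.
Variable S : ra_sig.
Local Notation "x ∧ y" := (ra_meet x y) (at level 40, left associativity).
Local Notation "x ∨ y" := (ra_join x y) (at level 50, left associativity).

Definition ra_le (a b : S) : Prop := a ∧ b = a.

Definition is_bdl : Prop :=
  (forall a b c : S, a ∧ (b ∧ c) = (a ∧ b) ∧ c) /\
  (forall a b c : S, a ∨ (b ∨ c) = (a ∨ b) ∨ c) /\
  (forall a b : S, a ∧ b = b ∧ a) /\
  (forall a b : S, a ∨ b = b ∨ a) /\
  (forall a b : S, a ∧ (a ∨ b) = a) /\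
  (forall a b : S, a ∨ (a ∧ b) = a) /\
  (forall a : S, a ∧ ra_top S = a /\ a ∨ ra_bot S = a) /\
  (forall a b c : S, a ∧ (b ∨ c) = (a ∧ b) ∨ (a ∧ c)).

Definition is_resalg : Prop :=
  is_bdl /\
      (forall a b c : S, ra_ldiv a (b ∧ c) = ra_ldiv a b ∧ ra_ldiv a c) /\
      (forall a : S, ra_ldiv a (ra_top S) = ra_top S) /\
      (forall a b c : S, ra_rdiv (b ∧ c) a = ra_rdiv b a ∧ ra_rdiv c a) /\
      (forall a : S, ra_rdiv (ra_top S) a = ra_top S) /\
      (forall a b c : S, ra_le b (ra_ldiv a c) <-> ra_le a (ra_rdiv c b)).
End RaLaws.

(* residuated lattices whose lattice reduct is bounded distributive
   (so that the residuation-algebra reduct and its dual are defined) *)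
Definition is_rl (S : rl_sig) : Prop :=
  [/\ is_resalg S,
      (forall a b c : S, rl_mul a (rl_mul b c) = rl_mul (rl_mul a b) c),
      (forall a : S, rl_mul (rl_unit S) a = a /\ rl_mul a (rl_unit S) = a) &
      (forall a b c : S,
         (ra_le (rl_mul a b) c <-> ra_le b (ra_ldiv a c)) /\
         (ra_le (rl_mul a b) c <-> ra_le a (ra_rdiv c b)))].

(* A universal sentence  forall x_1 ... x_n, psi  (psi quantifier      *)
(* free) is represented by psi itself; its truth in an algebra is      *)
(* truth of psi under every assignment of the variables.               *)
Inductive rterm : Type :=
  | RVar of nat | RBot | RTop
  | RMeet of rterm & rterm | RJoin of rterm & rterm
  | RLdiv of rterm & rterm | RRdiv of rterm & rterm.

Inductive lterm : Type :=
  | LVar of nat | LBot | LTop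
  | LMeet of lterm & lterm | LJoin of lterm & lterm
  | LLdiv of lterm & lterm | LRdiv of lterm & lterm
  | LMul of lterm & lterm | LUnit.

Inductive qf (T : Type) : Type :=
  | QEq of T & T
  | QTrue | QFalse
  | QNot of qf T
  | QAnd of qf T & qf T
  | QOr of qf T & qf T
  | QImp of qf T & qf T.

Fixpoint qf_holds (T : Type) (E : T -> T -> Prop) (f : qf T) : Prop :=
  match f with
  | QEq t u => E t u
  | QTrue => True
  | QFalse => False
  | QNot g => ~ qf_holds E g
  | QAnd g h => qf_holds E g /\ qf_holds E h
  | QOr g h => qf_holds E g \/ qf_holds E h
  | QImp g h => qf_holds E g -> qf_holds E h
  end.

Fixpoint reval (S : ra_sig) (v : nat -> S) (t : rterm) : S :=
  match t with
  | RVar n => v n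
  | RBot => ra_bot S
  | RTop => ra_top S
  | RMeet t u => ra_meet (reval v t) (reval v u)
  | RJoin t u => ra_join (reval v t) (reval v u)
  | RLdiv t u => ra_ldiv (reval v t) (reval v u)
  | RRdiv t u => ra_rdiv (reval v t) (reval v u)
  end.

Fixpoint leval (S : rl_sig) (v : nat -> S) (t : lterm) : S :=
  match t with
  | LVar n => v n
  | LBot => ra_bot S
  | LTop => ra_top S
  | LMeet t u => ra_meet (leval v t) (leval v u)
  | LJoin t u => ra_join (leval v t) (leval v u)
  | LLdiv t u => ra_ldiv (leval v t) (leval v u)
  | LRdiv t u => ra_rdiv (leval v t) (leval v u)
  | LMul t u => rl_mul (leval v t) (leval v u)
  | LUnit => rl_unit S
  end.

Definition ra_models (S : ra_sig) (phi : qf rterm) : Prop :=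
  forall v : nat -> S, qf_holds (fun t u => reval v t = reval v u) phi.

Definition rl_models (S : rl_sig) (phi : qf lterm) : Prop :=
  forall v : nat -> S, qf_holds (fun t u => leval v t = leval v u) phi.

Fixpoint all_prop (T : Type) (X : T -> Prop) (s : seq T) : Prop :=
  match s with [::] => True | x :: s' => X x /\ all_prop X s' end.

Section CanExt.
Variable S : ra_sig.
Variables (C : Type) (le : C -> C -> Prop)
          (Sup Inf : (C -> Prop) -> C) (e : S -> C).

Definition is_complete_lattice : Prop :=
  [/\ (forall x, le x x),
      (forall x y, le x y -> le y x -> x = y),
      (forall x y z, le x y -> le y z -> le x z),
      (forall X x, X x -> le x (Sup X)) /\
      (forall X u, (forall x, X x -> le x u) -> le (Sup X) u) &
      (forall X x, X x -> le (Inf X) x) /\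
      (forall X u, (forall x, X x -> le u x) -> le u (Inf X))].

Definition img (X : S -> Prop) : C -> Prop := fun c => exists2 a, X a & c = e a.

Definition closedC (k : C) : Prop := exists X : S -> Prop, k = Inf (img X).
Definition openC (o : C) : Prop := exists X : S -> Prop, o = Sup (img X).

Definition is_canonical_ext : Prop :=
  is_complete_lattice /\
      (forall a b : S, le (e a) (e b) <-> ra_le a b) /\
      (forall a b : S, e (ra_meet a b) = Inf (fun c => c = e a \/ c = e b) /\
                       e (ra_join a b) = Sup (fun c => c = e a \/ c = e b)) /\
      (e (ra_bot S) = Sup (fun _ => False) /\ e (ra_top S) = Inf (fun _ => False)) /\
      (forall u, u = Sup (fun k => closedC k /\ le k u) /\
                 u = Inf (fun o => openC o /\ le u o)) /\
      (forall X Y : S -> Prop, le (Inf (img X)) (Sup (img Y)) ->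
         exists xs ys : seq S,
           [/\ all_prop X xs,
               all_prop Y ys &
               ra_le (foldr (@ra_meet S) (ra_top S) xs)
                     (foldr (@ra_join S) (ra_bot S) ys)]).

Definition pi_ldiv_ko (k o : C) : C :=
  Sup (fun x => exists a b : S, [/\ le k (e a), le (e b) o & x = e (ra_ldiv a b)]).
Definition pi_ldiv (u v : C) : C :=
  Inf (fun x => exists k o, [/\ closedC k, le k u, openC o, le v o & x = pi_ldiv_ko k o]).

(* pi-extension of / (monotone in the first, antitone in the second
   coordinate; symmetric to \) *)
Definition pi_rdiv_ok (o k : C) : C :=
  Sup (fun x => exists b a : S, [/\ le (e b) o, le k (e a) & x = e (ra_rdiv b a)]).
Definition pi_rdiv (u v : C) : C :=
  Inf (fun x => exists o k, [/\ openC o, le u o, closedC k, le k v & x = pi_rdiv_ok o k]).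

Definition is_product (pr : C -> C -> C) : Prop :=
  forall u v w, (le v (pi_ldiv u w) <-> le (pr u v) w) /\
                (le (pr u v) w <-> le u (pi_rdiv w v)).

Definition botC : C := Sup (fun _ => False).

Definition cji (j : C) : Prop := forall X : C -> Prop, j = Sup X -> X j.
End CanExt.

Definition dual_functional (S : ra_sig) : Prop :=
  forall (C : Type) (le : C -> C -> Prop) (Sup Inf : (C -> Prop) -> C) (e : S -> C),
    is_canonical_ext le Sup Inf e ->
    forall pr : C -> C -> C, is_product le Sup Inf e pr ->
    forall y z, cji Sup y -> cji Sup z ->
      cji Sup (pr y z) \/ pr y z = botC Sup.

Definition dual_total (S : ra_sig) : Prop :=
  forall (C : Type) (le : C -> C -> Prop) (Sup Inf : (C -> Prop) -> C) (e : S -> C),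
    is_canonical_ext le Sup Inf e ->
    forall pr : C -> C -> C, is_product le Sup Inf e pr ->
    forall y z, cji Sup y -> cji Sup z -> cji Sup (pr y z).

Definition ra_closed (S : ra_sig) (P : S -> bool) : Prop :=
  P (ra_bot S) /\ P (ra_top S) /\
      (forall a b, P a -> P b -> P (ra_meet a b)) /\
      (forall a b, P a -> P b -> P (ra_join a b)) /\
      (forall a b, P a -> P b -> P (ra_ldiv a b)) /\
      (forall a b, P a -> P b -> P (ra_rdiv a b)).

Definition rl_closed (S : rl_sig) (P : S -> bool) : Prop :=
  [/\ ra_closed P, P (rl_unit S) & (forall a b, P a -> P b -> P (rl_mul a b))].

Section Sub.
Variables (S : ra_sig) (P : S -> bool) (d : {x : S | P x}).
Definition sub_op (op : S -> S -> S) (a b : {x : S | P x}) : {x : S | P x} :=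
  match P (op (sval a) (sval b)) as c return P (op (sval a) (sval b)) = c -> {x : S | P x} with
  | true => fun h => exist (fun x => P x) _ h
  | false => fun _ => d
  end erefl.
Definition sub_cst (c : S) : {x : S | P x} :=
  match P c as b return P c = b -> {x : S | P x} with
  | true => fun h => exist (fun x => P x) _ h
  | false => fun _ => d
  end erefl.
(* the induced algebra on {x | P x}; it is the subalgebra with universe P
   whenever ra_closed P holds *)
Definition sub_ra : ra_sig :=
  @RaSig {x : S | P x} (sub_op (@ra_meet S)) (sub_op (@ra_join S))
         (sub_cst (ra_bot S)) (sub_cst (ra_top S))
         (sub_op (@ra_ldiv S)) (sub_op (@ra_rdiv S)).
End Sub.

Local Open Scope ring_scope.

Definition cx_mul (X Y : {set 'Z_3}) : {set 'Z_3} := [set x + y | x in X, y in Y].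
Definition cx_ldiv (X Y : {set 'Z_3}) : {set 'Z_3} := [set c | cx_mul X [set c] \subset Y].
Definition cx_rdiv (X Y : {set 'Z_3}) : {set 'Z_3} := [set c | cx_mul [set c] Y \subset X].

Definition Z3cx_ra : ra_sig :=
  @RaSig {set 'Z_3} (@setI _) (@setU _) set0 setT cx_ldiv cx_rdiv.

Definition Z3cx : rl_sig := @RlSig Z3cx_ra cx_mul [set 0].

Definition U4 : {set {set 'Z_3}} := [set set0; [set 0]; [set 1; 2]; setT].

Definition inU4 (X : Z3cx_ra) : bool := X \in U4.

Lemma set0_inU4 : inU4 set0.
Proof. by rewrite /inU4 !inE eqxx. Qed.

Definition Z3sub : ra_sig := sub_ra (exist (fun x => inU4 x) set0 set0_inU4).

From mathcomp Require Import all_boot all_order all_algebra.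
From Stdlib Require Import Classical ClassicalEpsilon FunctionalExtensionality.
Set Implicit Arguments. Unset Strict Implicit. Unset Printing Implicit Defensive.
Import GRing.Theory.

(* Universal sentences are preserved under subalgebras, so it suffices to find a residuated
   lattice with functional dual having a subalgebra whose dual is not functional.  For a finite
   algebra, density and compactness force the embedding into any canonical extension to be onto,
   so the completely join-irreducibles of the dual are the join-irreducibles of the algebra and
   the product of the dual is the residuated multiplication.  In the complex algebra of a finite
   magma the join-irreducibles are the singletons and {x}.{y} = {xy}, so the dual is total.  The
   subsets of Z_3 invariant under x |-> -x, namely {}, {0}, {1,2} and Z_3, form a subalgebra; in
   it {1,2} is join-irreducible while {1,2}.{1,2} = Z_3 = {0} U {1,2} is neither empty nor
   join-irreducible. *)

Definition pbool (Q : Prop) : bool := if excluded_middle_informative Q then true else false.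

Lemma pboolP (Q : Prop) : reflect Q (pbool Q).
Proof. by rewrite /pbool; case: excluded_middle_informative => h; constructor. Qed.

Lemma In_mem (T : eqType) (x : T) (s : seq T) : x \in s -> List.In x s.
Proof. by elim: s => //= y s IHs; rewrite inE => /orP [/eqP ->|/IHs]; [left|right]. Qed.

Lemma In_enum (T : finType) (x : T) : List.In x (enum T).
Proof. by apply: In_mem; rewrite mem_enum. Qed.

Section CompleteLattice.
Variables (C : Type) (le : C -> C -> Prop) (Sup Inf : (C -> Prop) -> C).
Hypothesis CL : is_complete_lattice le Sup Inf.

Lemma le_refl x : le x x. Proof. by case: CL. Qed.
Lemma le_anti x y : le x y -> le y x -> x = y. Proof. by case: CL => _ H _ _ _; apply: H. Qed.
Lemma le_trans x y z : le x y -> le y z -> le x z. Proof. by case: CL => _ _ H _ _; apply: H. Qed.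
Lemma Sup_ub X x : X x -> le x (Sup X). Proof. by case: CL => _ _ _ [H _] _; apply: H. Qed.
Lemma Sup_lub X u : (forall x, X x -> le x u) -> le (Sup X) u.
Proof. by case: CL => _ _ _ [_ H] _; apply: H. Qed.
Lemma Inf_lb X x : X x -> le (Inf X) x. Proof. by case: CL => _ _ _ _ [H _]; apply: H. Qed.
Lemma Inf_glb X u : (forall x, X x -> le u x) -> le u (Inf X).
Proof. by case: CL => _ _ _ _ [_ H]; apply: H. Qed.

Lemma Sup_max X u : X u -> (forall x, X x -> le x u) -> Sup X = u.
Proof. by move=> Xu H; apply: le_anti; [apply: Sup_lub | apply: Sup_ub]. Qed.
Lemma Inf_min X u : X u -> (forall x, X x -> le u x) -> Inf X = u.
Proof. by move=> Xu H; apply: le_anti; [apply: Inf_lb | apply: Inf_glb]. Qed.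

End CompleteLattice.

Section LatticeEmbedding.
Variables (S : ra_sig) (C : Type) (le : C -> C -> Prop) (Sup Inf : (C -> Prop) -> C).
Variable e : S -> C.
Hypothesis CL : is_complete_lattice le Sup Inf.
Hypothesis e_le : forall a b : S, le (e a) (e b) <-> ra_le a b.
Hypothesis e_meet_join : forall a b : S,
  e (ra_meet a b) = Inf (fun c => c = e a \/ c = e b) /\
  e (ra_join a b) = Sup (fun c => c = e a \/ c = e b).
Hypothesis e_bot_top : e (ra_bot S) = Sup (fun _ => False) /\ e (ra_top S) = Inf (fun _ => False).

Local Notation bigmeet xs := (foldr (@ra_meet S) (ra_top S) xs).
Local Notation bigjoin xs := (foldr (@ra_join S) (ra_bot S) xs).

Lemma le_e_bigmeet u xs : le u (e (bigmeet xs)) <-> forall a, List.In a xs -> le u (e a).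
Proof.
elim: xs => [|b xs IHxs] /=; first by rewrite (proj2 e_bot_top); split=> // _; apply: (Inf_glb CL).
rewrite (proj1 (e_meet_join _ _)); split=> [ule a [<-|xs_a] | ub].
- by apply: (le_trans CL) ule _; apply: (Inf_lb CL); left.
- by move: a xs_a; apply/IHxs; apply: (le_trans CL) ule _; apply: (Inf_lb CL); right.
- apply: (Inf_glb CL) => _ [->|->]; first by apply: ub; left.
  by apply/IHxs => a xs_a; apply: ub; right.
Qed.

Lemma e_bigjoin_le u xs : le (e (bigjoin xs)) u <-> forall a, List.In a xs -> le (e a) u.
Proof.
elim: xs => [|b xs IHxs] /=; first by rewrite (proj1 e_bot_top); split=> // _; apply: (Sup_lub CL).
rewrite (proj2 (e_meet_join _ _)); split=> [jle a [<-|xs_a] | ub].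
- by apply: (le_trans CL) jle; apply: (Sup_ub CL); left.
- by move: a xs_a; apply/IHxs; apply: (le_trans CL) jle; apply: (Sup_ub CL); right.
- apply: (Sup_lub CL) => _ [->|->]; first by apply: ub; left.
  by apply/IHxs => a xs_a; apply: ub; right.
Qed.

Lemma not_cji_join a b :
  e (ra_join a b) <> e a -> e (ra_join a b) <> e b -> ~ cji Sup (e (ra_join a b)).
Proof. by move=> ne_a ne_b /(_ _ (proj2 (e_meet_join a b))) [/ne_a|/ne_b]. Qed.

Lemma not_cji_bot : ~ cji Sup (e (ra_bot S)).
Proof. by move/(_ _ (proj1 e_bot_top)). Qed.

Lemma botC_e : botC Sup = e (ra_bot S).
Proof. by rewrite (proj1 e_bot_top). Qed.

Variable enumS : seq S.
Hypothesis enumS_all : forall a : S, List.In a enumS.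

Definition elements (X : S -> Prop) : seq S := [seq a <- enumS | pbool (X a)].

Lemma In_elements X a : List.In a (elements X) <-> X a.
Proof.
rewrite /elements; split.
- elim: enumS => //= b s IHs.
  by case: pboolP => [Xb|_] /=; [case=> [<-//|/IHs] | exact: IHs].
- move=> Xa; elim: enumS (enumS_all a) => //= b s IHs.
  case: pboolP => [_|nXb] /= [ba|/IHs s_a]; [by left | by right | | by []].
  by case: nXb; rewrite ba.
Qed.

Lemma all_prop_elements X : all_prop X (elements X).
Proof.
have : forall a, List.In a (elements X) -> X a by move=> a /In_elements.
elim: (elements X) => //= a s IHs Xs; split; first by apply: Xs; left.
by apply: IHs => b sb; apply: Xs; right.
Qed.

Lemma Inf_img X : Inf (img e X) = e (bigmeet (elements X)).
Proof.
apply: (le_anti CL).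
- by apply/le_e_bigmeet => a /In_elements Xa; apply: (Inf_lb CL); exists a.
- apply: (Inf_glb CL) => _ [a Xa ->].
  by apply: (proj1 (le_e_bigmeet _ _) (le_refl CL _)); apply/In_elements.
Qed.

Lemma Sup_img X : Sup (img e X) = e (bigjoin (elements X)).
Proof.
apply: (le_anti CL).
- apply: (Sup_lub CL) => _ [a Xa ->].
  by apply: (proj1 (e_bigjoin_le _ _) (le_refl CL _)); apply/In_elements.
- by apply/e_bigjoin_le => a /In_elements Xa; apply: (Sup_ub CL); exists a.
Qed.

Lemma closedC_e a : closedC Inf e (e a).
Proof.
exists (eq^~ a); symmetry; apply: (Inf_min CL); first by exists a.
by move=> _ [_ -> ->]; apply: (le_refl CL).
Qed.

Lemma openC_e a : openC Sup e (e a).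
Proof.
exists (eq^~ a); symmetry; apply: (Sup_max CL); first by exists a.
by move=> _ [_ -> ->]; apply: (le_refl CL).
Qed.

Lemma closedC_img k : closedC Inf e k -> exists a, k = e a.
Proof. by case=> X ->; rewrite Inf_img; eexists. Qed.

Lemma e_surj_of_density :
  (forall u, u = Sup (fun k => closedC Inf e k /\ le k u)) -> forall u, exists a, u = e a.
Proof.
move=> dense u; exists (bigjoin (elements (fun a => le (e a) u))); rewrite -Sup_img.
apply: (le_anti CL); last by apply: (Sup_lub CL) => _ [a le_au ->].
rewrite {1}(dense u); apply: (Sup_lub CL) => k [/closedC_img [a ->] le_au].
by apply: (Sup_ub CL); exists a.
Qed.

Lemma canonical_ext_of_surj : (forall u, exists a, u = e a) -> is_canonical_ext le Sup Inf e.
Proof.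
move=> e_surj; do 4 (split; first by []); split.
- move=> u; have [a ->] := e_surj u; split; symmetry.
  + apply: (Sup_max CL) => [|_ []//]; split; [exact: closedC_e | exact: (le_refl CL)].
  + apply: (Inf_min CL) => [|_ []//]; split; [exact: openC_e | exact: (le_refl CL)].
- move=> X Y; rewrite Inf_img Sup_img => /e_le le_XY.
  by exists (elements X), (elements Y); split=> //; apply: all_prop_elements.
Qed.

End LatticeEmbedding.

Section CanonicalExtension.
Variables (S : ra_sig) (C : Type) (le : C -> C -> Prop) (Sup Inf : (C -> Prop) -> C).
Variable e : S -> C.
Hypothesis ext : is_canonical_ext le Sup Inf e.
Variable enumS : seq S.
Hypothesis enumS_all : forall a : S, List.In a enumS.

Let CL : is_complete_lattice le Sup Inf := proj1 ext.
Let e_le : forall a b : S, le (e a) (e b) <-> ra_le a b := proj1 (proj2 ext).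

Lemma e_surj u : exists a, u = e a.
Proof.
have [_ [_ [e_meet_join [e_bot_top [dense _]]]]] := ext.
by apply: (e_surj_of_density CL e_meet_join e_bot_top enumS_all) => v; case: (dense v).
Qed.

Lemma cji_atom a :
  ~ ra_le a (ra_bot S) -> (forall b, ra_le b a -> ra_le a b \/ ra_le b (ra_bot S)) ->
  cji Sup (e a).
Proof.
move=> a_nbot atom X aX; apply: NNPP => nXa; apply/a_nbot/e_le.
rewrite aX; apply: (Sup_lub CL) => x Xx; have [b xb] := e_surj x; subst x.
have le_ba : le (e b) (e a) by rewrite aX; apply: (Sup_ub CL).
case: (atom b (proj1 (e_le b a) le_ba)) => [/e_le le_ab|/e_le //].
by case: nXa; rewrite (le_anti CL le_ab le_ba).
Qed.

Hypothesis RA : is_resalg S.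

Let ra_le_refl (a : S) : ra_le a a.
Proof. exact/e_le/(le_refl CL). Qed.

Let ra_le_trans (a b c : S) : ra_le a b -> ra_le b c -> ra_le a c.
Proof. by move=> /e_le ab /e_le bc; apply/e_le; apply: (le_trans CL) ab bc. Qed.

Let residuation (a b c : S) : ra_le b (ra_ldiv a c) <-> ra_le a (ra_rdiv c b).
Proof. by case: RA => _ [_ [_ [_ [_ res]]]]. Qed.

Let ldiv_monor (a c c' : S) : ra_le c c' -> ra_le (ra_ldiv a c) (ra_ldiv a c').
Proof. by case: RA => _ [ldivI _] cc'; rewrite /ra_le -ldivI cc'. Qed.

Let rdiv_monol (a c c' : S) : ra_le c c' -> ra_le (ra_rdiv c a) (ra_rdiv c' a).
Proof. by case: RA => _ [_ [_ [rdivI _]]] cc'; rewrite /ra_le -rdivI cc'. Qed.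

Let ldiv_antil (a a' c : S) : ra_le a' a -> ra_le (ra_ldiv a c) (ra_ldiv a' c).
Proof. by move=> a'a; apply/residuation; apply: ra_le_trans a'a _; apply/residuation. Qed.

Let rdiv_antir (c a a' : S) : ra_le a' a -> ra_le (ra_rdiv c a) (ra_rdiv c a').
Proof. by move=> a'a; apply/residuation; apply: ra_le_trans a'a _; apply/residuation. Qed.

Lemma pi_ldiv_e a c : pi_ldiv le Sup Inf e (e a) (e c) = e (ra_ldiv a c).
Proof.
have ko_e a' c' : pi_ldiv_ko le Sup e (e a') (e c') = e (ra_ldiv a' c').
  apply: (Sup_max CL); first by exists a', c'; split=> //; apply: (le_refl CL).
  move=> _ [a'' [c'' [/e_le a'a'' /e_le c''c' ->]]].
  by apply/e_le; apply: ra_le_trans (ldiv_antil _ a'a'') (ldiv_monor _ c''c').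
apply: (Inf_min CL).
  exists (e a), (e c); split; [exact: (closedC_e e CL) | exact: (le_refl CL)
    | exact: (openC_e e CL) | exact: (le_refl CL) | by rewrite ko_e].
move=> _ [k [o [_ ka _ co ->]]]; have [a' ?] := e_surj k; have [c' ?] := e_surj o; subst k o.
rewrite ko_e; apply/e_le; move/e_le: ka => ka; move/e_le: co => co.
exact: ra_le_trans (ldiv_monor _ co) (ldiv_antil _ ka).
Qed.

Lemma pi_rdiv_e c b : pi_rdiv le Sup Inf e (e c) (e b) = e (ra_rdiv c b).
Proof.
have ok_e c' b' : pi_rdiv_ok le Sup e (e c') (e b') = e (ra_rdiv c' b').
  apply: (Sup_max CL); first by exists c', b'; split=> //; apply: (le_refl CL).
  move=> _ [c'' [b'' [/e_le c''c' /e_le b'b'' ->]]].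
  by apply/e_le; apply: ra_le_trans (rdiv_monol _ c''c') (rdiv_antir _ b'b'').
apply: (Inf_min CL).
  exists (e c), (e b); split; [exact: (openC_e e CL) | exact: (le_refl CL)
    | exact: (closedC_e e CL) | exact: (le_refl CL) | by rewrite ok_e].
move=> _ [o [k [_ co _ kb ->]]]; have [c' ?] := e_surj o; have [b' ?] := e_surj k; subst o k.
rewrite ok_e; apply/e_le; move/e_le: co => co; move/e_le: kb => kb.
exact: ra_le_trans (rdiv_monol _ co) (rdiv_antir _ kb).
Qed.

Lemma product_e pr a b m : is_product le Sup Inf e pr ->
  (forall c, ra_le m c <-> ra_le b (ra_ldiv a c)) -> pr (e a) (e b) = e m.
Proof.
move=> prod_pr m_res; have [p Ep] := e_surj (pr (e a) (e b)); rewrite Ep.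
apply: (le_anti CL).
- by rewrite -Ep; apply/(proj1 (prod_pr _ _ _)); rewrite pi_ldiv_e; apply/e_le/m_res.
- apply/e_le/m_res/e_le; rewrite -pi_ldiv_e; apply/(proj1 (prod_pr _ _ _)).
  by rewrite -Ep; apply: (le_refl CL).
Qed.

Lemma is_product_of_residual pr (m : S -> S -> S) :
  (forall a b, pr (e a) (e b) = e (m a b)) ->
  (forall a b c, (ra_le b (ra_ldiv a c) <-> ra_le (m a b) c) /\
                 (ra_le (m a b) c <-> ra_le a (ra_rdiv c b))) ->
  is_product le Sup Inf e pr.
Proof.
move=> pr_e m_res u v w.
have [a ->] := e_surj u; have [b ->] := e_surj v; have [c ->] := e_surj w.
by rewrite pr_e pi_ldiv_e pi_rdiv_e !e_le.
Qed.

End CanonicalExtension.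

Lemma qf_holds_iff T (E E' : T -> T -> Prop) (f : qf T) :
  (forall t u, E t u <-> E' t u) -> qf_holds E f <-> qf_holds E' f.
Proof. by move=> EE'; elim: f => /= *; [exact: EE' | tauto ..]. Qed.

Section Subalgebra.
Variables (S : ra_sig) (P : pred S) (d : {x : S | P x}).

Let sval_sub_match y b (E : P y = b) : P y ->
  sval ((if b as c return P y = c -> {x | P x} then fun h => exist _ y h else fun=> d) E) = y.
Proof. by case: b E => // ->. Qed.

Lemma sval_sub_op op (a b : {x | P x}) :
  P (op (sval a) (sval b)) -> sval (sub_op d op a b) = op (sval a) (sval b).
Proof. exact: sval_sub_match. Qed.

Lemma sval_sub_cst c : P c -> sval (sub_cst d c) = c.
Proof. exact: sval_sub_match. Qed.

Lemma sval_inj : injective (@sval S P).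
Proof. exact: val_inj. Qed.

Hypothesis P_closed : ra_closed P.

Lemma sub_botE : sval (ra_bot (sub_ra d)) = ra_bot S.
Proof. by apply: sval_sub_cst; case: P_closed. Qed.
Lemma sub_topE : sval (ra_top (sub_ra d)) = ra_top S.
Proof. by apply: sval_sub_cst; case: P_closed => _ []. Qed.
Lemma sub_meetE (a b : sub_ra d) : sval (ra_meet a b) = ra_meet (sval a) (sval b).
Proof. by apply: sval_sub_op; case: P_closed => _ [_ [PI _]]; apply: PI; apply: valP. Qed.
Lemma sub_joinE (a b : sub_ra d) : sval (ra_join a b) = ra_join (sval a) (sval b).
Proof. by apply: sval_sub_op; case: P_closed => _ [_ [_ [PU _]]]; apply: PU; apply: valP. Qed.
Lemma sub_ldivE (a b : sub_ra d) : sval (ra_ldiv a b) = ra_ldiv (sval a) (sval b).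
Proof. by apply: sval_sub_op; case: P_closed => _ [_ [_ [_ [PL _]]]]; apply: PL; apply: valP. Qed.
Lemma sub_rdivE (a b : sub_ra d) : sval (ra_rdiv a b) = ra_rdiv (sval a) (sval b).
Proof. by apply: sval_sub_op; case: P_closed => _ [_ [_ [_ [_ PR]]]]; apply: PR; apply: valP. Qed.

Definition sub_raE := (sub_botE, sub_topE, sub_meetE, sub_joinE, sub_ldivE, sub_rdivE).

Lemma sub_ra_le (a b : sub_ra d) : ra_le a b <-> ra_le (sval a) (sval b).
Proof. by rewrite /ra_le -sub_meetE; split=> [->|/sval_inj]. Qed.

Lemma reval_sub (v : nat -> sub_ra d) t : sval (reval v t) = reval (fun n => sval (v n)) t.
Proof.
by elim: t => /= [n|||t IHt u IHu|t IHt u IHu|t IHt u IHu|t IHt u IHu]; rewrite ?sub_raE ?IHt ?IHu.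
Qed.

Lemma ra_models_sub phi : ra_models S phi -> ra_models (sub_ra d) phi.
Proof.
move=> Sphi v; apply: (proj1 (qf_holds_iff _ _)) (Sphi (fun n => sval (v n))) => t u.
by rewrite -!reval_sub; split=> [/sval_inj|->].
Qed.

Lemma is_resalg_sub : is_resalg S -> is_resalg (sub_ra d).
Proof.
move=> [[mA [jA [mC [jC [mjK [jmK [bt dist]]]]]]] [ldivI [ldivT [rdivI [rdivT res]]]]].
split; last first.
  do 4 (split; first by move=> *; apply: sval_inj; rewrite !sub_raE).
  by move=> a b c; rewrite !sub_ra_le !sub_raE.
do 6 (split; first by move=> *; apply: sval_inj; rewrite !sub_raE).
split; last by move=> *; apply: sval_inj; rewrite !sub_raE.
by move=> a; split; apply: sval_inj; rewrite !sub_raE; case: (bt (sval a)).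
Qed.

End Subalgebra.

Section SubResiduatedLattice.
Variables (S : rl_sig) (P : pred S) (d : {x : S | P x}).

Definition sub_rl : rl_sig := @RlSig (sub_ra d) (sub_op d (@rl_mul S)) (sub_cst d (rl_unit S)).

Hypothesis P_closed : rl_closed P.
Let P_ra_closed : ra_closed P. Proof. by case: P_closed. Qed.

Lemma sub_mulE (a b : sub_rl) : sval (rl_mul a b) = rl_mul (sval a) (sval b).
Proof. by apply: sval_sub_op; case: P_closed => _ _ PM; apply: PM; apply: valP. Qed.

Lemma sub_unitE : sval (rl_unit sub_rl) = rl_unit S.
Proof. by apply: sval_sub_cst; case: P_closed. Qed.

Lemma leval_sub (v : nat -> sub_rl) t : sval (leval v t) = leval (fun n => sval (v n)) t.
Proof.
elim: t => [n|||t IHt u IHu|t IHt u IHu|t IHt u IHu|t IHt u IHu|t IHt u IHu|];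
  by rewrite ?(sub_raE d P_ra_closed) ?sub_mulE ?sub_unitE ?IHt ?IHu.
Qed.

Lemma rl_models_sub phi : rl_models S phi -> rl_models sub_rl phi.
Proof.
move=> Sphi v; apply: (proj1 (qf_holds_iff _ _)) (Sphi (fun n => sval (v n))) => t u.
by rewrite -!leval_sub; split=> [/sval_inj|->].
Qed.

Lemma is_rl_sub : is_rl S -> is_rl sub_rl.
Proof.
case=> RA mulA mul1 res; split; first exact: is_resalg_sub.
- by move=> *; apply: sval_inj; rewrite !sub_mulE.
- by move=> a; split; apply: sval_inj; rewrite !sub_mulE sub_unitE; case: (mul1 (sval a)).
- by move=> a b c; rewrite !(sub_ra_le P_ra_closed) !(sub_raE d P_ra_closed) sub_mulE.
Qed.

End SubResiduatedLattice.

Section ComplexAlgebra.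
Variables (T : finType) (op : T -> T -> T).

Definition cmul (X Y : {set T}) : {set T} := [set op x y | x in X, y in Y].
Definition cldiv (X Z : {set T}) : {set T} := [set c | cmul X [set c] \subset Z].
Definition crdiv (Z Y : {set T}) : {set T} := [set c | cmul [set c] Y \subset Z].

Definition complex_ra : ra_sig := @RaSig {set T} (@setI T) (@setU T) set0 setT cldiv crdiv.
Definition complex_rl (u : T) : rl_sig := @RlSig complex_ra cmul [set u].

Lemma complex_le (X Y : complex_ra) : ra_le X Y <-> X \subset Y.
Proof. by split=> /setIidPl. Qed.

Lemma cmul_set1 x y : cmul [set x] [set y] = [set op x y].
Proof. by rewrite /cmul imset2_set1l imset_set1. Qed.

Lemma cldivP (X Z : {set T}) c : reflect (forall x, x \in X -> op x c \in Z) (c \in cldiv X Z).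
Proof.
rewrite inE; apply: (iffP subsetP) => [XcZ x Xx | XcZ _ /imset2P [x _ Xx /set1P -> ->]].
  by apply: XcZ; apply: imset2_f; rewrite ?inE.
exact: XcZ.
Qed.

Lemma crdivP (Z Y : {set T}) c : reflect (forall y, y \in Y -> op c y \in Z) (c \in crdiv Z Y).
Proof.
rewrite inE; apply: (iffP subsetP) => [cYZ y Yy | cYZ _ /imset2P [_ y /set1P -> Yy ->]].
  by apply: cYZ; apply: imset2_f; rewrite ?inE.
exact: cYZ.
Qed.

Lemma cmul_subsetl (X Y Z : {set T}) : (cmul X Y \subset Z) = (Y \subset cldiv X Z).
Proof.
apply/subsetP/subsetP => [XYZ y Yy | YXZ _ /imset2P [x y Xx Yy ->]].
  by apply/cldivP => x Xx; apply: XYZ; apply: imset2_f.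
exact: cldivP (YXZ y Yy) x Xx.
Qed.

Lemma cmul_subsetr (X Y Z : {set T}) : (cmul X Y \subset Z) = (X \subset crdiv Z Y).
Proof.
apply/subsetP/subsetP => [XYZ x Xx | XZY _ /imset2P [x y Xx Yy ->]].
  by apply/crdivP => y Yy; apply: XYZ; apply: imset2_f.
exact: crdivP (XZY x Xx) y Yy.
Qed.

Lemma is_resalg_complex : is_resalg complex_ra.
Proof.
split.
  split; first exact: setIA.
  split; first exact: setUA.
  split; first exact: setIC.
  split; first exact: setUC.
  split; first by move=> A B; rewrite /= setIC setUK.
  split; first by move=> A B; rewrite /= setUC setIK.
  split; first by move=> A; rewrite /= setIT setU0.
  exact: setIUr.
do 4 (split; first by move=> *; apply/setP => c; rewrite !inE ?subsetI ?subsetT).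
by move=> X Y Z; rewrite !complex_le -cmul_subsetl cmul_subsetr.
Qed.

Lemma cmulA : associative op -> associative cmul.
Proof.
move=> opA X Y Z; apply/setP => t; apply/imset2P/imset2P.
  case=> x _ Xx /imset2P [y z Yy Zz ->] ->.
  by exists (op x y) z; rewrite ?opA // imset2_f.
case=> _ z /imset2P [x y Xx Yy ->] Zz ->.
by exists x (op y z); rewrite ?opA // imset2_f.
Qed.

Lemma cmul1X u : left_id u op -> left_id [set u] cmul.
Proof. by move=> op1 X; rewrite /cmul imset2_set1l (eq_imset _ op1) imset_id. Qed.

Lemma cmulX1 u : right_id u op -> right_id [set u] cmul.
Proof. by move=> op1 X; rewrite /cmul imset2_set1r (eq_imset _ op1) imset_id. Qed.

Lemma is_rl_complex u :
  associative op -> left_id u op -> right_id u op -> is_rl (complex_rl u).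
Proof.
move=> opA op1 op1'; split; first exact: is_resalg_complex.
- exact: cmulA.
- by move=> X; split; [apply: cmul1X | apply: cmulX1].
- by move=> X Y Z; rewrite !complex_le -cmul_subsetl -cmul_subsetr.
Qed.

End ComplexAlgebra.

Section ComplexCanonicalExtension.
Variables (T : finType) (op : T -> T -> T).
Variables (C : Type) (le : C -> C -> Prop) (Sup Inf : (C -> Prop) -> C).
Variable e : complex_ra op -> C.
Hypothesis ext : is_canonical_ext le Sup Inf e.

Lemma cji_e_set1 x : cji Sup (e [set x]).
Proof.
apply: (cji_atom ext (In_enum (T := {set T}))) => [/complex_le/subsetP/(_ x (set11 x))|B].
  by rewrite inE.
by rewrite !complex_le subset1 => /orP [/eqP ->|/eqP ->]; [left | right].
Qed.

Lemma cji_eP A : cji Sup (e A) -> exists x, A = [set x].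
Proof.
have [CL [e_le [e_meet_join [e_bot_top _]]]] := ext.
have e_inj : injective e.
  move=> B B' eBB'; apply/eqP; rewrite eqEsubset.
  by apply/andP; split; apply/complex_le/e_le; rewrite eBB'; apply: (le_refl CL).
case: (set_0Vmem A) => [-> /(not_cji_bot e_bot_top) // | [x Ax]].
case: (eqVneq A [set x]) => [-> _ | nAx]; first by exists x.
rewrite -(setD1K Ax) => cjiA; exfalso; move: cjiA; apply: (not_cji_join e_meet_join).
  by move/e_inj; rewrite /= setD1K // => eqAx; rewrite eqAx eqxx in nAx.
by move/e_inj/setP/(_ x); rewrite /= setD1K // !inE eqxx Ax.
Qed.

End ComplexCanonicalExtension.

Lemma dual_total_complex (T : finType) (op : T -> T -> T) : dual_total (complex_ra op).
Proof.
move=> C le Sup Inf e ext pr prod_pr y z.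
have enum_all := In_enum (T := {set T}).
have [A ->] := e_surj ext enum_all y; have [B ->] := e_surj ext enum_all z.
move=> /(cji_eP ext) [x ->] /(cji_eP ext) [x' ->].
rewrite (product_e ext enum_all (is_resalg_complex op) (m := [set op x x']) prod_pr).
  exact: (cji_e_set1 ext).
by move=> c; rewrite !complex_le -cmul_set1 cmul_subsetl.
Qed.

Local Open Scope ring_scope.

Section SymmetricSubsets.
Variable G : finZmodType.

Definition symmetric (A : {set G}) : bool := [forall x, (- x \in A) == (x \in A)].

Lemma symmetricP (A : {set G}) : reflect (forall x, x \in A -> - x \in A) (symmetric A).
Proof.
apply: (iffP forallP) => [symA x Ax | symA x]; first by rewrite (eqP (symA x)).
by apply/eqP; apply/idP/idP => [/symA|/symA //]; rewrite opprK.
Qed.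

Lemma symmetric_closed : rl_closed (S := complex_rl (+%R : G -> G -> G) 0) symmetric.
Proof.
split; first do !split.
- by apply/symmetricP => x; rewrite inE.
- by apply/symmetricP => x; rewrite inE.
- move=> A B /symmetricP symA /symmetricP symB; apply/symmetricP => x.
  by rewrite !inE => /andP [/symA -> /symB ->].
- move=> A B /symmetricP symA /symmetricP symB; apply/symmetricP => x.
  by rewrite !inE => /orP [/symA -> | /symB ->]; rewrite ?orbT.
- move=> A B /symmetricP symA /symmetricP symB; apply/symmetricP => c /cldivP ABc.
  by apply/cldivP => a /symA/ABc/symB; rewrite opprD opprK.
- move=> B A /symmetricP symB /symmetricP symA; apply/symmetricP => c /crdivP BAc.
  by apply/crdivP => a /symA/BAc/symB; rewrite opprD opprK.
- by apply/symmetricP => x; rewrite !inE => /eqP ->; rewrite oppr0.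
- move=> A B /symmetricP symA /symmetricP symB; apply/symmetricP => _ /imset2P [a b Aa Bb ->].
  by rewrite opprD; apply: imset2_f; [apply: symA | apply: symB].
Qed.

End SymmetricSubsets.

Section ComplexSubalgebra.
Variables (T : finType) (op : T -> T -> T) (P : pred {set T}).
Hypothesis P_closed : ra_closed (S := complex_ra op) P.

Definition members (X : {A | P A} -> Prop) (A : {set T}) : bool :=
  pbool (exists2 u, X u & sval u = A).

Lemma members_closed X A : members X A -> P A.
Proof. by case/pboolP=> u _ <-; apply: valP. Qed.

Lemma bigcup_closed (Q : pred {set T}) : (forall A, Q A -> P A) -> P (\bigcup_(A | Q A) A).
Proof. by move=> QP; case: P_closed => P0 [_ [_ [PU _]]]; apply: (big_ind P). Qed.

Lemma bigcap_closed (Q : pred {set T}) : (forall A, Q A -> P A) -> P (\bigcap_(A | Q A) A).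
Proof. by move=> QP; case: P_closed => _ [PT [PI _]]; apply: (big_ind P). Qed.

Definition sub_set_le (u v : {A | P A}) : Prop := sval u \subset sval v.
Definition sub_set_Sup X : {A | P A} :=
  exist _ (\bigcup_(A | members X A) A) (bigcup_closed (@members_closed X)).
Definition sub_set_Inf X : {A | P A} :=
  exist _ (\bigcap_(A | members X A) A) (bigcap_closed (@members_closed X)).

Lemma sub_set_complete_lattice : is_complete_lattice sub_set_le sub_set_Sup sub_set_Inf.
Proof.
split.
- by move=> u; apply: subxx.
- by move=> u v uv vu; apply: (@sval_inj (complex_ra op)); apply/eqP; rewrite eqEsubset uv.
- by move=> u v w; apply: subset_trans.
- split=> [X u Xu | X v ub]; first by apply: (bigcup_sup (sval u)); apply/pboolP; exists u.
  by apply/bigcupsP => _ /pboolP [u Xu <-]; apply: ub.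
- split=> [X u Xu | X v lb]; first by apply: (bigcap_inf (sval u)); apply/pboolP; exists u.
  by apply/bigcapsP => _ /pboolP [u Xu <-]; apply: lb.
Qed.

Variable d : {A : complex_ra op | P A}.
Local Notation sub := (sub_ra d).

Lemma In_sub_enum (u : sub) : List.In u [seq sub_cst d A | A <- enum {set T}].
Proof.
have -> : u = sub_cst d (sval u).
  by apply: (@sval_inj (complex_ra op)); rewrite sval_sub_cst //; apply: valP.
by apply: In_mem; rewrite map_f // mem_enum.
Qed.

Lemma sub_set_canonical_ext :
  is_canonical_ext sub_set_le sub_set_Sup sub_set_Inf (fun u : sub => u).
Proof.
have CL := sub_set_complete_lattice.
have E := sub_raE d P_closed.
apply: (canonical_ext_of_surj CL _ _ _ In_sub_enum) => [u v | u v | | u]; last by exists u.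
- by rewrite (sub_ra_le P_closed) complex_le.
- split; apply: (le_anti CL).
  + by apply: (Inf_glb CL) => _ [->|->]; rewrite /sub_set_le E ?subsetIl ?subsetIr.
  + by rewrite /sub_set_le E subsetI; apply/andP; split; apply: (Inf_lb CL); [left | right].
  + by rewrite /sub_set_le E subUset; apply/andP; split; apply: (Sup_ub CL); [left | right].
  + by apply: (Sup_lub CL) => _ [->|->]; rewrite /sub_set_le E ?subsetUl ?subsetUr.
- split; apply: (le_anti CL).
  + by rewrite /sub_set_le E sub0set.
  + by apply: (Sup_lub CL) => _ [].
  + by apply: (Inf_glb CL) => _ [].
  + by rewrite /sub_set_le E subsetT.
Qed.

Hypothesis P_cmul : forall A B, P A -> P B -> P (cmul op A B).

Lemma sub_set_product :
  is_product sub_set_le sub_set_Sup sub_set_Inf (fun u : sub => u) (sub_op d (cmul op)).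
Proof.
have RA := is_resalg_sub d P_closed (is_resalg_complex op).
apply: (is_product_of_residual sub_set_canonical_ext In_sub_enum RA (m := sub_op d (cmul op))).
  by [].
move=> a b c; have mulE : sval (sub_op d (cmul op) a b) = cmul op (sval a) (sval b).
  by apply: sval_sub_op; apply: P_cmul; apply: valP.
by rewrite !(sub_ra_le P_closed) !(sub_raE d P_closed) mulE !complex_le -cmul_subsetl -cmul_subsetr.
Qed.

End ComplexSubalgebra.

Lemma dual_total_functional (S : ra_sig) : dual_total S -> dual_functional S.
Proof.
by move=> total C le Sup Inf e ext pr prod_pr y z cjiy cjiz; left; apply: (total C le Sup Inf e).
Qed.

Lemma no_universal_ra_sentence (S : ra_sig) (P : pred S) (d : {x : S | P x}) :
  ra_closed P -> is_resalg S -> dual_functional S -> ~ dual_functional (sub_ra d) ->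
  ~ exists phi : qf rterm,
      forall S : ra_sig, is_resalg S -> (ra_models S phi <-> dual_functional S).
Proof.
move=> P_closed RA funS nfun_sub [phi axiom]; apply: nfun_sub.
by apply/(axiom _ (is_resalg_sub d P_closed RA))/ra_models_sub/(axiom _ RA).
Qed.

Lemma no_universal_rl_sentence (S : rl_sig) (P : pred S) (d : {x : S | P x}) :
  rl_closed P -> is_rl S -> dual_functional S -> ~ dual_functional (sub_rl d) ->
  ~ exists phi : qf lterm,
      forall S : rl_sig, is_rl S -> (rl_models S phi <-> dual_functional S).
Proof.
move=> P_closed RL funS nfun_sub [phi axiom]; apply: nfun_sub.
by apply/(axiom _ (is_rl_sub d P_closed RL))/rl_models_sub/(axiom _ RL).
Qed.

Lemma Z3_cases (x : 'Z_3) : [\/ x = 0, x = 1 | x = 2].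
Proof.
by case: x => [[|[|[|]]] // ?]; [constructor 1 | constructor 2 | constructor 3]; apply: val_inj.
Qed.

Lemma inU4_symmetric : inU4 =1 symmetric (G := 'Z_3).
Proof.
move=> A; apply/idP/symmetricP => [|symA].
  by rewrite /inU4 !inE -!orbA => /or4P [] /eqP -> x; case: (Z3_cases x) => ->; rewrite !inE.
have N1 : - 1 = 2 :> 'Z_3 by apply/eqP.
have sym12 : (1 \in A) = (2 \in A) by apply/idP/idP => /symA; rewrite -N1 ?opprK.
rewrite /inU4 !inE -!orbA; apply/or4P.
case A0: (0 \in A); case A1: (1 \in A);
  [constructor 4 | constructor 2 | constructor 3 | constructor 1];
  by apply/eqP/setP => x; case: (Z3_cases x) => ->; rewrite !inE ?A0 -?sym12 ?A1.
Qed.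

Lemma U4_closed : rl_closed (S := Z3cx) inU4.
Proof. by rewrite (functional_extensionality _ _ inU4_symmetric); apply: symmetric_closed. Qed.

Lemma inU4_set12 : inU4 [set 1; 2].
Proof. by rewrite /inU4 !inE eqxx !orbT. Qed.

Lemma inU4_set1 : inU4 [set 0].
Proof. by rewrite /inU4 !inE eqxx !orbT. Qed.

Lemma cmul_set12 : cmul +%R [set 1; 2] [set 1; 2] = [set: 'Z_3].
Proof.
apply/setP => x; rewrite inE; apply/imset2P.
by case: (Z3_cases x) => ->; [exists 1 2 | exists 2 2 | exists 1 1]; rewrite ?inE //; apply/eqP.
Qed.

Lemma setU_set1_set12 : [set 0] :|: [set 1; 2] = [set: 'Z_3].
Proof. by apply/setP => x; rewrite !inE; case: (Z3_cases x) => ->. Qed.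

Lemma set12_atom A : inU4 A -> A \subset [set 1; 2] -> A = set0 \/ [set 1; 2] \subset A.
Proof.
rewrite /inU4 !inE -!orbA => /or4P [] /eqP ->; [by left | | by right | ];
  by move/subsetP/(_ 0); rewrite !inE ?eqxx => /(_ isT).
Qed.

Lemma not_dual_functional_Z3sub : ~ dual_functional Z3sub.
Proof.
have [U4_ra_closed _ U4_cmul] := U4_closed.
pose d := exist (fun x => inU4 x) set0 set0_inU4.
have ext := sub_set_canonical_ext (op := +%R) U4_ra_closed d.
have [_ [_ [e_meet_join [e_bot_top _]]]] := ext.
have E := sub_raE d U4_ra_closed.
pose H0 : Z3sub := exist _ [set 0] inU4_set1.
pose H12 : Z3sub := exist _ [set 1; 2] inU4_set12.
have cji12 : cji (sub_set_Sup (op := +%R) U4_ra_closed) H12.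
  apply: (cji_atom ext (In_sub_enum (d := d)) (a := H12)) => [|b];
    rewrite !(sub_ra_le U4_ra_closed) !complex_le E.
    by move/subsetP/(_ 1); rewrite !inE eqxx => /(_ isT).
  by case/(set12_atom (valP b)) => [->|]; [right; apply: sub0set | left].
have H12H12 : sub_op d (cmul +%R) H12 H12 = ra_top Z3sub.
  apply: sval_inj; rewrite E sval_sub_op /=; first exact: cmul_set12.
  exact: (U4_cmul _ _ inU4_set12 inU4_set12).
have H0H12 : ra_join H0 H12 = ra_top Z3sub by apply: sval_inj; rewrite !E /= setU_set1_set12.
move=> /(_ _ _ _ _ _ ext _ (sub_set_product U4_ra_closed d U4_cmul) H12 H12 cji12 cji12).
rewrite H12H12 (botC_e e_bot_top) => -[|/(f_equal sval)]; last first.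
  by rewrite !E => /setP/(_ 0); rewrite !inE.
rewrite -H0H12; apply: (not_cji_join e_meet_join) => /(f_equal sval); rewrite H0H12 E => /setP.
  by move/(_ 1); rewrite !inE.
by move/(_ 0); rewrite !inE.
Qed.

Theorem mainTheorem5 :
  (* no universal sentence in the language of residuation algebras *)
  (~ exists phi : qf rterm,
       forall S : ra_sig, is_resalg S -> (ra_models S phi <-> dual_functional S)) /\
  (* no universal sentence in the language of residuated lattices *)
  (~ exists phi : qf lterm,
       forall S : rl_sig, is_rl S -> (rl_models S phi <-> dual_functional S)) /\
  (* the complex algebra of Z_3: a residuated lattice with dual_functional,
     indeed total, dual structure *)
  is_rl Z3cx /\ dual_functional Z3cx /\ dual_total Z3cx /\
  (* {emptyset, {0}, {1,2}, Z_3} is a subalgebra, whose dual is not dual_functional *)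
  rl_closed (S := Z3cx) inU4 /\ ~ dual_functional Z3sub.
Proof.
have Z3_rl : is_rl Z3cx := is_rl_complex (@addrA _) (@add0r _) (@addr0 _).
have Z3_total : dual_total Z3cx := @dual_total_complex _ +%R.
have Z3_functional := dual_total_functional Z3_total.
have [U4_ra_closed _ _] := U4_closed.
have [Z3_ra _ _ _] := Z3_rl.
split; first exact: (no_universal_ra_sentence U4_ra_closed Z3_ra Z3_functional
                       not_dual_functional_Z3sub).
split; first exact: (no_universal_rl_sentence U4_closed Z3_rl Z3_functional
                       not_dual_functional_Z3sub).
do 3 split=> //.
by split; [exact: U4_closed | exact: not_dual_functional_Z3sub].
Qed.
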